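(* Let $d\ge3$, $\beta>0$, $g:\mathbb{R}^d\to\mathbb{R}$ Lipschitz. There are positive constants $C_1,C_2$ depending only on $d,\beta,g$ such that for any $\varepsilon>0$, $s,t\in\mathbb{Z}_{\ge0}$ and $x\in\mathbb{Z}^d$, \[ |G_\varepsilon(s,x)-G_\varepsilon(t,x)|\le C_1\varepsilon|t-s|^{1/2}e^{C_2(\varepsilon|x|+\varepsilon^2s+\varepsilon^2t)}. \]
   Context: $\{S_n\}_{n\ge0}$ is simple symmetric random walk on $\mathbb{Z}^d$ started at the origin; $g_\varepsilon(x)=g(\varepsilon x)$ and $G_\varepsilon(t,x)=\mathbb{E}(e^{\beta g_\varepsilon(S_t+x)})$ for $t\in\mathbb{Z}_{\ge0}$, $x\in\mathbb{Z}^d$. *)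

From mathcomp Require Import all_boot all_order all_algebra.
From mathcomp Require Import all_classical all_reals all_analysis.
Set Implicit Arguments. Unset Strict Implicit. Unset Printing Implicit Defensive.
Import Order.TTheory GRing.Theory Num.Theory.
Local Open Scope ring_scope.

Definition enorm (R : realType) (d : nat) (u : 'I_d -> R) : R :=
  Num.sqrt (\sum_(i < d) u i ^+ 2).

Definition lipschitz_Rd (R : realType) (d : nat) (g : ('I_d -> R) -> R) : Prop :=
  exists L : R, forall u v : 'I_d -> R,
    `|g u - g v| <= L * enorm (fun i => u i - v i).

Definition step_vec (d : nat) (st : 'I_d * bool) : 'I_d -> int :=
  fun j => if j == st.1 then (if st.2 then 1 else -1) else 0.

Definition walk_pos (d t : nat) (w : {ffun 'I_t -> 'I_d * bool}) : 'I_d -> int :=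
  fun j => \sum_(k < t) step_vec (w k) j.

(* G_eps(t,x) = E[ exp(beta * g(eps (S_t + x))) ], where S is simple symmetric
   random walk on Z^d started at 0: every one of the (2d)^t step sequences of
   length t is equally likely. *)
Definition G_eps (R : realType) (d : nat) (beta : R) (g : ('I_d -> R) -> R)
    (eps : R) (t : nat) (x : 'I_d -> int) : R :=
  ((2 * d) ^ t)%:R^-1 *
  \sum_(w : {ffun 'I_t -> 'I_d * bool})
     expR (beta * g (fun j => eps * ((walk_pos w j + x j)%:~R))).

Definition znorm (R : realType) (d : nat) (x : 'I_d -> int) : R :=
  enorm (fun i => (x i)%:~R : R).

From mathcomp Require Import all_boot all_order all_algebra.
From mathcomp Require Import all_classical all_reals all_analysis.
From mathcomp Require Import ring lra.
Import Order.TTheory GRing.Theory Num.Theory.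
Local Open Scope ring_scope.

(* Put h(y) = exp(beta g(eps y)) and a = beta L eps, so that
   G_eps(t, x) = E h(x + S_t).  The product Phi_a(y) = prod_i cosh(a y_i) is an
   eigenfunction of the walk: its one-step mean is cosh(a) Phi_a(y), hence
   E Phi_a(y + S_n) = cosh(a)^n Phi_a(y).  By the Lipschitz bound,
   h <= C Phi_a and |h(y + z) - h(y)| <= a |z|_1 e^(a |z|_1) h(y); writing
   |z|_1 <= sqrt n e^(|z|_1 / sqrt n) makes the mean of the right-hand side over
   z = S_n an eigenfunction mean again, so |E h(y + S_n) - h(y)| <= K a sqrt n Phi_a(y)
   with K = O(e^(4 a^2 n)).  The Markov property propagates this to
   |G_eps(s + n, x) - G_eps(s, x)| <= K a sqrt n cosh(a)^s Phi_a(x), and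
   cosh(a)^s <= e^(2 a^2 s), Phi_a(x) <= e^(d a |x|) conclude. *)

Section ExpInequalities.
Context {R : realType}.
Implicit Types u v s : R.

Definition coshR u : R := (expR u + expR (- u)) / 2.

Lemma coshR_ge0 u : 0 <= coshR u.
Proof. by rewrite divr_ge0 ?addr_ge0 ?expR_ge0. Qed.

Lemma coshR0 : coshR 0 = 1.
Proof. by rewrite /coshR oppr0 expR0; field. Qed.

Lemma coshRD_coshRB u v : coshR (u + v) + coshR (u - v) = 2 * coshR u * coshR v.
Proof. by rewrite /coshR !opprD !expRD !opprK; field. Qed.

Lemma expR_norm_le_coshR u : expR `|u| <= 2 * coshR u.
Proof.
rewrite /coshR; have := expR_gt0 u; have := expR_gt0 (- u).
by case: (lerP 0 u) => u0; [rewrite ger0_norm | rewrite ltr0_norm]; lra.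
Qed.

Lemma coshR_le_expR_norm u : coshR u <= expR `|u|.
Proof.
have : expR u <= expR `|u| by rewrite ler_expR ler_norm.
have : expR (- u) <= expR `|u| by rewrite ler_expR -normrN ler_norm.
by rewrite /coshR; lra.
Qed.

Lemma expR_mul_subr_le1 u : expR u * (1 - u) <= 1.
Proof.
rewrite -[leRHS](expRxMexpNx_1 u) ler_wpM2l ?expR_ge0 //.
by have := expR_ge1Dx (- u); lra.
Qed.

(* Near 0 we use [expR u <= 1 / (1 - u)], far from 0 [|u| <= 2 u^2]. *)
Lemma coshR_le_expR_sqr u : coshR u <= expR (2 * u ^+ 2).
Proof.
have [small|large] := lerP (u ^+ 2) (4^-1).
  apply: le_trans (expR_ge1Dx _); rewrite /coshR.
  have /andP[u_ge u_le] : - 2^-1 <= u <= 2^-1.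
    by rewrite -ler_norml; rewrite -[u ^+ 2](real_normK (num_real u)) in small; nra.
  have := expR_mul_subr_le1 u; have := expR_mul_subr_le1 (- u); rewrite opprK.
  have := expR_gt0 u; have := expR_gt0 (- u).
  set E := expR u; set E' := expR (- u) => E'0 E0 hE' hE.
  have hS : (E + E') * (1 - u ^+ 2) <= 2.
    have uD1_ge0 : 0 <= 1 + u by lra.
    have uB1_ge0 : 0 <= 1 - u by lra.
    have := ler_wpM2r uD1_ge0 hE; have := ler_wpM2r uB1_ge0 hE'.
    nra.
  nra.
apply: le_trans (coshR_le_expR_norm u) _; rewrite ler_expR.
have := normr_ge0 u; rewrite -(real_normK (num_real u)) in large *; nra.
Qed.

Lemma coshRX_le_expR n u : coshR u ^+ n <= expR (2 * u ^+ 2 * n%:R).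
Proof.
rewrite expRM_natr; apply: lerXn2r; rewrite ?nnegrE ?coshR_ge0 ?expR_ge0 //.
exact: coshR_le_expR_sqr.
Qed.

Lemma normr_expR_sub1 v : `|expR v - 1| <= `|v| * expR `|v|.
Proof.
have E1 := expR_ge1Dx v; have E2 := expR_mul_subr_le1 v.
have [v0|v0] := lerP 0 v.
  have ge1 : 1 <= expR v by rewrite -expR0 ler_expR.
  by rewrite !ger0_norm ?subr_ge0 //; lra.
have lt1 : expR v < 1 by rewrite -expR0 ltr_expR.
have ge1 : 1 <= expR (- v) by rewrite -expR0 ler_expR; lra.
rewrite (ltr0_norm v0) ltr0_norm ?subr_lt0 //.
have : 0 <= - v * (expR (- v) - 1) by rewrite mulr_ge0; lra.
lra.
Qed.

Lemma normr_expR_sub u v :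
  `|expR u - expR v| <= `|u - v| * expR `|u - v| * expR v.
Proof.
rewrite -{1}(subrK v u) expRD -{2}(mul1r (expR v)) -mulrBl normrM.
by rewrite (ger0_norm (expR_ge0 v)) ler_wpM2r ?expR_ge0 ?normr_expR_sub1.
Qed.

Lemma le_mul_expR_div s u : 0 < s -> u <= s * expR (u / s).
Proof.
move=> s0; rewrite -ler_pdivrMl // mulrC.
by have := expR_ge1Dx (u / s); lra.
Qed.

Lemma increment_rate_le (B eps z : R) (d s n : nat) :
  0 <= B -> 0 <= eps -> 0 <= z ->
  4 * (B * eps) ^+ 2 * n%:R + 2 * (B * eps) ^+ 2 * s%:R + d%:R * (B * eps) * z
    <= (4 * B ^+ 2 + B * d%:R) * (eps * z + eps ^+ 2 * s%:R + eps ^+ 2 * (s + n)%:R).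
Proof.
move=> B_ge0 eps_ge0 z_ge0; rewrite natrD.
have t1 := mulr_ge0 (mulr_ge0 (sqr_ge0 B) eps_ge0) z_ge0.
have t2 := mulr_ge0 (sqr_ge0 (B * eps)) (ler0n R s).
have Bd_ge0 : 0 <= B * d%:R * eps ^+ 2 by rewrite !mulr_ge0 ?sqr_ge0.
have t3 := mulr_ge0 Bd_ge0 (ler0n R s); have t4 := mulr_ge0 Bd_ge0 (ler0n R n).
nra.
Qed.

End ExpInequalities.

Section EuclideanNorm.
Context {R : realType} {d : nat}.

Lemma enorm_le_sum_normr (u : 'I_d -> R) : enorm u <= \sum_i `|u i|.
Proof.
have S_ge0 : 0 <= \sum_i `|u i| by apply: sumr_ge0 => i _.
rewrite /enorm -(ger0_norm S_ge0) -sqrtr_sqr ler_sqrt ?sqr_ge0 //.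
rewrite expr2 mulr_suml; apply: ler_sum => i _.
rewrite -(real_normK (num_real (u i))) expr2 ler_wpM2l //.
by rewrite (bigD1 i) //= lerDl; apply: sumr_ge0 => j _.
Qed.

Lemma normr_le_enorm (u : 'I_d -> R) i : `|u i| <= enorm u.
Proof.
rewrite /enorm -sqrtr_sqr ler_sqrt; last by apply: sumr_ge0 => j _; rewrite sqr_ge0.
by rewrite (bigD1 i) //= lerDl; apply: sumr_ge0 => j _; rewrite sqr_ge0.
Qed.

End EuclideanNorm.

Definition ffun_cons {T : finType} {t} (a : T) (f : {ffun 'I_t -> T}) :
  {ffun 'I_t.+1 -> T} := [ffun i => oapp f a (unlift ord0 i)].

Lemma sum_ffunS (V : nmodType) (T : finType) t (F : {ffun 'I_t.+1 -> T} -> V) :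
  \sum_(f : {ffun 'I_t.+1 -> T}) F f =
  \sum_(a : T) \sum_(f : {ffun 'I_t -> T}) F (ffun_cons a f).
Proof.
rewrite pair_big (reindex (fun p : T * _ => ffun_cons p.1 p.2)) //=.
exists (fun f => (f ord0, [ffun j => f (lift ord0 j)])) => [[a f] _ | f _].
  rewrite /ffun_cons ffunE unlift_none; congr pair.
  by apply/ffunP => j; rewrite !ffunE liftK.
by apply/ffunP => i; rewrite ffunE; case: unliftP => [j ->|->] /=; rewrite ?ffunE.
Qed.

Section WalkMean.
Variables (R : realType) (d : nat).
Local Notation point := ('I_d -> int).
Implicit Types (F : point -> R) (y z : point) (a c K : R).

Definition walk_mean t F : R :=
  ((2 * d) ^ t)%:R^-1 * \sum_(w : {ffun 'I_t -> 'I_d * bool}) F (walk_pos w).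

Lemma walk_pos_cons t st (w : {ffun 'I_t -> 'I_d * bool}) :
  walk_pos (ffun_cons st w) = step_vec st + walk_pos w.
Proof.
apply: funext => j; rewrite addrfctE /walk_pos big_ord_recl ffunE unlift_none.
by congr (_ + _); apply: eq_bigr => k _; rewrite ffunE liftK.
Qed.

Lemma walk_mean0 F : walk_mean 0 F = F 0.
Proof.
have pos0 (w : {ffun 'I_0 -> 'I_d * bool}) : walk_pos w = 0.
  by apply: funext => j; rewrite /walk_pos big_ord0.
rewrite /walk_mean expn0 invr1 mul1r (eq_bigr _ (fun w _ => congr1 F (pos0 w))).
by rewrite sumr_const card_ffun card_ord expn0.
Qed.

Lemma walk_meanS t F :
  walk_mean t.+1 F =
  (2 * d)%:R^-1 * \sum_(st : 'I_d * bool) walk_mean t (fun z => F (step_vec st + z)).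
Proof.
rewrite /walk_mean sum_ffunS expnS natrM invfM -mulrA; congr (_ * _).
rewrite mulr_sumr; apply: eq_bigr => st _.
by under eq_bigr do rewrite walk_pos_cons.
Qed.

Lemma walk_mean_translateS t y F :
  walk_mean t.+1 (fun z => F (z + y)) =
  (2 * d)%:R^-1 * \sum_(st : 'I_d * bool) walk_mean t (fun z => F (z + (step_vec st + y))).
Proof.
rewrite walk_meanS; congr (_ * _); apply: eq_bigr => st _; congr walk_mean.
by apply: funext => z; rewrite addrCA addrA.
Qed.

Lemma walk_meanB t F G :
  walk_mean t (fun z => F z - G z) = walk_mean t F - walk_mean t G.
Proof. by rewrite /walk_mean sumrB mulrBr. Qed.

Lemma walk_meanZ t c F : walk_mean t (fun z => c * F z) = c * walk_mean t F.
Proof. by rewrite /walk_mean -mulr_sumr mulrCA. Qed.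

Lemma ler_walk_mean t F G : (forall z, F z <= G z) -> walk_mean t F <= walk_mean t G.
Proof. by move=> FG; rewrite ler_wpM2l ?invr_ge0 ?ler0n // ler_sum. Qed.

Lemma normr_walk_mean_le t F : `|walk_mean t F| <= walk_mean t (fun z => `|F z|).
Proof.
rewrite normrM ger0_norm ?invr_ge0 ?ler0n // ler_wpM2l ?invr_ge0 ?ler0n //.
exact: ler_norm_sum.
Qed.

Hypothesis d_gt0 : (0 < d)%N.

Lemma walk_mean_cst t c : walk_mean t (fun=> c) = c.
Proof.
rewrite /walk_mean sumr_const card_ffun !card_prod !card_ord card_bool mulnC.
rewrite -[c *+ _]mulr_natr mulrCA mulVf ?mulr1 //.
by rewrite pnatr_eq0 -lt0n expn_gt0 muln_gt0 d_gt0.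
Qed.

Definition prod_coshR (a : R) y : R := \prod_(i < d) coshR (a * (y i)%:~R).

Lemma prod_coshR_ge0 a y : 0 <= prod_coshR a y.
Proof. by apply: prodr_ge0 => i _; apply: coshR_ge0. Qed.

Lemma walk_step_prod_coshR a y :
  (2 * d)%:R^-1 * \sum_(st : 'I_d * bool) prod_coshR a (step_vec st + y) =
  coshR a * prod_coshR a y.
Proof.
have pair_step i :
    \sum_(b : bool) prod_coshR a (step_vec (i, b) + y) = 2 * coshR a * prod_coshR a y.
  have split_i b : prod_coshR a (step_vec (i, b) + y) =
      coshR (a * (y i)%:~R + (if b then a else - a)) *
      \prod_(j < d | j != i) coshR (a * (y j)%:~R).
    rewrite /prod_coshR (bigD1 i) //; congr (_ * _).
      rewrite addrfctE /step_vec /= eqxx intrD mulrDr addrC.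
      by case: b; rewrite ?mulrN1 ?mulr1.
    by apply: eq_bigr => j /negPf ji; rewrite addrfctE /step_vec /= ji add0r.
  rewrite big_bool !split_i /= -mulrDl coshRD_coshRB /prod_coshR [in RHS](bigD1 i) //=.
  ring.
have -> : \sum_(st : 'I_d * bool) prod_coshR a (step_vec st + y) =
          \sum_(i < d) \sum_(b : bool) prod_coshR a (step_vec (i, b) + y).
  by rewrite pair_big; apply: eq_bigr => -[i b].
rewrite (eq_bigr _ (fun i _ => pair_step i)) sumr_const card_ord -mulr_natr natrM.
by field; rewrite pnatr_eq0 -lt0n.
Qed.

Lemma walk_mean_prod_coshR n a y :
  walk_mean n (fun z => prod_coshR a (z + y)) = coshR a ^+ n * prod_coshR a y.
Proof.
elim: n y => [|n IHn] y; first by rewrite walk_mean0 add0r expr0 mul1r.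
rewrite walk_mean_translateS (eq_bigr _ (fun st _ => IHn _)) -mulr_sumr mulrCA.
by rewrite walk_step_prod_coshR exprS mulrCA mulrA.
Qed.

Lemma walk_mean_prod_coshR0 n a : walk_mean n (prod_coshR a) = coshR a ^+ n.
Proof.
have prod0 : prod_coshR a 0 = 1.
  by rewrite /prod_coshR big1 // => i _; rewrite mulr0 coshR0.
by rewrite -[RHS]mulr1 -prod0 -walk_mean_prod_coshR; under eq_fun do rewrite addr0.
Qed.

Lemma walk_mean_increment_propagate F a K n :
  (forall y, `|walk_mean n (fun z => F (z + y)) - F y| <= K * prod_coshR a y) ->
  forall s y,
    `|walk_mean (s + n) (fun z => F (z + y)) - walk_mean s (fun z => F (z + y))|
      <= K * coshR a ^+ s * prod_coshR a y.
Proof.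
move=> base; elim=> [|s IHs] y.
  by rewrite add0n walk_mean0 add0r expr0 mulr1.
have c_ge0 : 0 <= (2 * d)%:R^-1 :> R by rewrite invr_ge0 ler0n.
rewrite addSn !walk_mean_translateS -mulrBr -sumrB normrM ger0_norm //.
apply: le_trans (ler_wpM2l c_ge0 (ler_norm_sum _ _ _)) _.
apply: le_trans (ler_wpM2l c_ge0 (ler_sum _ (fun st _ => IHs (step_vec st + y)))) _.
rewrite -mulr_sumr mulrCA walk_step_prod_coshR exprS.
by rewrite [in X in _ <= X](mulrC (coshR a)) !mulrA.
Qed.

Definition l1norm z : R := \sum_(i < d) `|(z i)%:~R : R|.

Lemma expR_l1norm_le a z : 0 <= a -> expR (a * l1norm z) <= 2 ^+ d * prod_coshR a z.
Proof.
move=> a_ge0; rewrite /l1norm mulr_sumr expR_sum /prod_coshR.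
rewrite -[in 2 ^+ d](card_ord d) -prodrMl; apply: ler_prod => i _.
by rewrite expR_ge0 -(ger0_norm a_ge0) -normrM (ger0_norm a_ge0) expR_norm_le_coshR.
Qed.

Lemma prod_coshR_le_expR_znorm a z :
  0 <= a -> prod_coshR a z <= expR (d%:R * a * znorm R z).
Proof.
move=> a_ge0; rewrite -mulrA expRM_natl -[in X in _ ^+ X](card_ord d) -prodr_const.
apply: ler_prod => i _; rewrite coshR_ge0 /=.
apply: (le_trans (coshR_le_expR_norm _)); rewrite ler_expR normrM (ger0_norm a_ge0).
by rewrite ler_wpM2l // (normr_le_enorm (fun i => (z i)%:~R)).
Qed.

Section WalkIncrement.
Variables (h : point -> R) (a M : R).
Hypotheses (a_gt0 : 0 < a) (h_ge0 : forall y, 0 <= h y)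
  (h_le : forall y, h y <= M * prod_coshR a y)
  (h_shift : forall y z,
     `|h (z + y) - h y| <= a * l1norm z * expR (a * l1norm z) * h y).

Lemma walk_mean_increment_le n y : (0 < n)%N ->
  `|walk_mean n (fun z => h (z + y)) - h y|
    <= a * Num.sqrt n%:R * 2 ^+ d * M * expR (4 * a ^+ 2 * n%:R + 4) * prod_coshR a y.
Proof.
move=> n_gt0; set r := Num.sqrt n%:R.
have r_gt0 : 0 < r by rewrite sqrtr_gt0 ltr0n.
have a_ge0 := ltW a_gt0; have r_ge0 := ltW r_gt0.
set b := a + r^-1.
have b_ge0 : 0 <= b by rewrite addr_ge0 ?invr_ge0.
(* [l1norm z <= r * expR (l1norm z / r)] trades the factor [l1norm z] for a
   slightly larger exponential rate, whose walk mean is explicit. *)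
have pointwise z :
    a * l1norm z * expR (a * l1norm z) * h y <= a * r * 2 ^+ d * h y * prod_coshR b z.
  have ahE_ge0 : 0 <= a * h y * expR (a * l1norm z).
    by rewrite !mulr_ge0 ?expR_ge0 ?h_ge0.
  have ahr_ge0 : 0 <= a * h y * r by rewrite !mulr_ge0 ?h_ge0.
  have := ler_wpM2l ahE_ge0 (le_mul_expR_div r (l1norm z) r_gt0).
  have -> : a * h y * expR (a * l1norm z) * (r * expR (l1norm z / r)) =
            a * h y * r * expR (b * l1norm z).
    by rewrite /b mulrDl expRD [r^-1 * _]mulrC; ring.
  have := ler_wpM2l ahr_ge0 (expR_l1norm_le b z b_ge0).
  lra.
have cosh_b : coshR b ^+ n <= expR (4 * a ^+ 2 * n%:R + 4).
  apply: le_trans (coshRX_le_expR _ _) _; rewrite ler_expR.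
  have nr : n%:R * r^-1 ^+ 2 = 1.
    by rewrite exprVn sqr_sqrtr ?ler0n // mulfV // pnatr_eq0 -lt0n.
  have := mulr_ge0 (ler0n R n) (sqr_ge0 (a - r^-1)); rewrite /b; nra.
rewrite -[X in _ - X](walk_mean_cst n (h y)) -walk_meanB.
apply: le_trans (normr_walk_mean_le _ _) _.
apply: le_trans (ler_walk_mean _ _ _ (h_shift y)) _.
apply: le_trans (ler_walk_mean _ _ _ pointwise) _.
rewrite walk_meanZ walk_mean_prod_coshR0.
have -> : a * r * 2 ^+ d * M * expR (4 * a ^+ 2 * n%:R + 4) * prod_coshR a y =
          a * r * 2 ^+ d * (M * prod_coshR a y * expR (4 * a ^+ 2 * n%:R + 4)) by ring.
rewrite -mulrA ler_wpM2l ?mulr_ge0 ?exprn_ge0 //.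
by apply: ler_pM; rewrite ?h_ge0 ?exprn_ge0 ?coshR_ge0.
Qed.

End WalkIncrement.

Section ExpLipschitz.
Variables (beta L eps : R) (g : ('I_d -> R) -> R).
Hypotheses (beta_gt0 : 0 < beta) (L_gt0 : 0 < L) (eps_gt0 : 0 < eps)
  (g_lip : forall u v, `|g u - g v| <= L * enorm (fun i => u i - v i)).

Let exp_g y := expR (beta * g (fun j => eps * (y j)%:~R)).

Lemma normr_g_scaled_sub y z :
  `|g (fun j => eps * ((z + y) j)%:~R) - g (fun j => eps * (y j)%:~R)|
    <= L * eps * l1norm z.
Proof.
apply: le_trans (g_lip _ _) _; rewrite -mulrA ler_pM2l //.
apply: le_trans (enorm_le_sum_normr _) _.
rewrite /l1norm mulr_sumr; apply: ler_sum => i _.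
by rewrite addrfctE /= intrD -mulrBr addrK normrM gtr0_norm.
Qed.

Lemma exp_g_le y :
  exp_g y <= expR (beta * g 0) * 2 ^+ d * prod_coshR (beta * L * eps) y.
Proof.
have a_ge0 : 0 <= beta * L * eps by rewrite !mulr_ge0 ?ltW.
have g0 : g (fun j => eps * ((0 : point) j)%:~R) = g 0.
  by congr g; apply: funext => j; rewrite mulr0.
have := normr_g_scaled_sub 0 y; rewrite addr0 g0 => /(le_trans (ler_norm _)) gy.
rewrite -mulrA; apply: (le_trans _ (ler_wpM2l (expR_ge0 _) (expR_l1norm_le _ y a_ge0))).
rewrite -expRD ler_expR; have := ler_wpM2l (ltW beta_gt0) gy; lra.
Qed.

Lemma exp_g_shift_le y z :
  `|exp_g (z + y) - exp_g y|
    <= beta * L * eps * l1norm z * expR (beta * L * eps * l1norm z) * exp_g y.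
Proof.
apply: le_trans (normr_expR_sub _ _) _.
have dg : `|beta * g (fun j => eps * ((z + y) j)%:~R) - beta * g (fun j => eps * (y j)%:~R)|
            <= beta * L * eps * l1norm z.
  by rewrite -mulrBr normrM gtr0_norm // -!mulrA ler_pM2l // mulrA normr_g_scaled_sub.
rewrite ler_wpM2r ?expR_ge0 //.
by apply: ler_pM; rewrite ?normr_ge0 ?expR_ge0 // ler_expR.
Qed.

Lemma G_eps_increment_le_prod_coshR s n x : (0 < n)%N ->
  `|G_eps beta g eps (s + n) x - G_eps beta g eps s x|
    <= beta * L * eps * Num.sqrt n%:R * 2 ^+ d * (expR (beta * g 0) * 2 ^+ d)
       * expR (4 * (beta * L * eps) ^+ 2 * n%:R + 4)
       * coshR (beta * L * eps) ^+ s * prod_coshR (beta * L * eps) x.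
Proof.
move=> n_gt0; have a_gt0 : 0 < beta * L * eps by rewrite !mulr_gt0.
(* [G_eps beta g eps t x] is convertible to [walk_mean t (fun z => exp_g (z + x))]. *)
have exp_g_ge0 y : 0 <= exp_g y by apply: expR_ge0.
apply: (walk_mean_increment_propagate exp_g (beta * L * eps) _ n) => y.
exact: walk_mean_increment_le _ _ _ a_gt0 exp_g_ge0 exp_g_le exp_g_shift_le n y n_gt0.
Qed.

Lemma G_eps_increment_le s n x :
  `|G_eps beta g eps s x - G_eps beta g eps (s + n) x|
    <= beta * L * 4 ^+ d * expR (beta * g 0 + 4) * eps * Num.sqrt `|(s + n)%:R - s%:R|
       * expR ((4 * (beta * L) ^+ 2 + beta * L * d%:R)
               * (eps * znorm R x + eps ^+ 2 * s%:R + eps ^+ 2 * (s + n)%:R)).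
Proof.
have [beta_ge0 L_ge0 eps_ge0] := And3 (ltW beta_gt0) (ltW L_gt0) (ltW eps_gt0).
have [->|n_gt0] := posnP n.
  by rewrite addn0 subrr normr0 !mulr_ge0 ?exprn_ge0 ?expR_ge0 ?sqrtr_ge0.
have -> : `|(s + n)%:R - s%:R| = n%:R :> R by rewrite natrD addrC addKr ger0_norm.
rewrite distrC; apply: le_trans (G_eps_increment_le_prod_coshR s n x n_gt0) _.
set a := beta * L * eps; have a_ge0 : 0 <= a by rewrite !mulr_ge0.
set P := a * _ * _ * _ * _.
have P_ge0 : 0 <= P by rewrite /P !mulr_ge0 ?exprn_ge0 ?expR_ge0 ?sqrtr_ge0.
have cosh_prod_le : P * coshR a ^+ s * prod_coshR a x <=
    P * expR (2 * a ^+ 2 * s%:R) * expR (d%:R * a * znorm R x).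
  apply: ler_pM; rewrite ?mulr_ge0 ?exprn_ge0 ?coshR_ge0 ?prod_coshR_ge0 //.
    by rewrite ler_wpM2l ?coshRX_le_expR.
  exact: prod_coshR_le_expR_znorm.
apply: le_trans cosh_prod_le _.
have four : (4 : R) ^+ d = 2 ^+ d * 2 ^+ d by rewrite -exprMn -natrM.
have -> : P * expR (2 * a ^+ 2 * s%:R) * expR (d%:R * a * znorm R x) =
    beta * L * 4 ^+ d * expR (beta * g 0 + 4) * eps * Num.sqrt n%:R *
    expR (4 * a ^+ 2 * n%:R + 2 * a ^+ 2 * s%:R + d%:R * a * znorm R x).
  by rewrite /P four !expRD /a; ring.
rewrite ler_wpM2l ?mulr_ge0 ?exprn_ge0 ?expR_ge0 ?sqrtr_ge0 //.
rewrite ler_expR /a.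
by apply: increment_rate_le; [exact: mulr_ge0 | | exact: sqrtr_ge0].
Qed.

End ExpLipschitz.

End WalkMean.

Lemma lipschitz_Rd_pos (R : realType) d (g : ('I_d -> R) -> R) :
  lipschitz_Rd g ->
  exists2 L : R, 0 < L & forall u v, `|g u - g v| <= L * enorm (fun i => u i - v i).
Proof.
move=> [L g_lip]; exists (`|L| + 1) => [|u v]; first by rewrite ltr_pwDr.
apply: le_trans (g_lip u v) _; apply: ler_wpM2r; first exact: sqrtr_ge0.
by have := ler_norm L; lra.
Qed.

Theorem lemma5p3 (R : realType) (d : nat) (beta : R) (g : ('I_d -> R) -> R) :
  (3 <= d)%N -> 0 < beta -> lipschitz_Rd g ->
  exists C1 C2 : R, 0 < C1 /\ 0 < C2 /\
    forall (eps : R) (s t : nat) (x : 'I_d -> int), 0 < eps ->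
      `|G_eps beta g eps s x - G_eps beta g eps t x|
        <= C1 * eps * Num.sqrt `|t%:R - s%:R|
           * expR (C2 * (eps * znorm R x + eps ^+ 2 * s%:R + eps ^+ 2 * t%:R)).
Proof.
move=> d_ge3 beta_gt0 /lipschitz_Rd_pos[L L_gt0 g_lip].
(* Of [3 <= d] the argument only uses [0 < d]. *)
have d_gt0 : (0 < d)%N by apply: leq_trans d_ge3.
exists (beta * L * 4 ^+ d * expR (beta * g 0 + 4)), (4 * (beta * L) ^+ 2 + beta * L * d%:R).
split; first by rewrite !mulr_gt0 ?exprn_gt0 ?expR_gt0.
split; first by rewrite addr_gt0 ?mulr_gt0 ?exprn_gt0 ?ltr0n.
move=> eps s t x eps_gt0.
wlog le_st : s t / (s <= t)%N.
  move=> W; have [/W //|/ltnW/W] := leqP s t.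
  by rewrite distrC (distrC t%:R) (addrAC _ (eps ^+ 2 * t%:R)).
rewrite -(subnKC le_st).
exact: G_eps_increment_le.
Qed.
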